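(* Let $f\colon M\to\mathbb{R}$ be a Morse function on a compact oriented smooth $n$-manifold, with Morse complex defined using a Morse–Smale metric. For any nontrivial commutative ring $\mathbb{K}$ with unity and any grading $k\in\{0,\dots,n-1\}$, $\beta^{alg}_k(f;\mathbb{K})=0$ if and only if $d_{f,k+1}=0$. Furthermore, if $\mathbb{K}$ is a field, then $\beta^{alg}_k(f;\mathbb{K})=\inf\{\beta\ge0:\ \forall\lambda\in\mathbb{R},\ \mathrm{Im}(d_{f,k+1})\cap CM^\lambda_k(f;\mathbb{K})\subset d_{f,k+1}(CM^{\lambda+\beta}_{k+1}(f;\mathbb{K}))\}$.
   Context: $CM_*(\pm f;\mathbb{K})$ are the Morse complexes (free $\mathbb{K}$-modules on critical points, the index of $p$ for $-f$ being $n-|p|_f$) with differentials $d_{\pm f}$ defined with the standard coherent orientation conventions: unstable manifolds of $f$ oriented arbitrarily (orientation of $M$ in index $n$, positive point in index $0$), stable manifolds oriented so that $W^u_f(p)\cap W^s_f(p)$ is a single positive point in the fiber product orientation, and $W^u_{-f}(p)=W^s_f(p)$. $\Pi(\sum_qa_qq,\sum_pb_pp)=\sum_pa_pb_p$ on $CM_{n-*}(-f)\times CM_*(f)$. $\Lambda\colon\mathrm{Im}(d_{-f})\times\mathrm{Im}(d_f)\to\mathbb{K}$, $\Lambda(x,y)=\Pi(x,z)$ for any $z$ with $d_fz=y$. $\ell_f(\sum_pa_pp)=\max\{f(p):a_p\ne0\}$ (with $\max\varnothing=-\infty$), $\ell_{-f}$ likewise for $-f$; $CM^\lambda_*(f;\mathbb{K})=\{y:\ell_f(y)\le\lambda\}$.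 $\beta^{alg}_k(f;\mathbb{K})=\sup(\{0\}\cup\{-\ell_{-f}(x)-\ell_f(y):x\in\mathrm{Im}(d_{-f,n-k}),y\in\mathrm{Im}(d_{f,k+1}),\Lambda(x,y)\ne0\})$. *)

From HB Require Import structures.
From mathcomp Require Import all_boot all_order all_algebra.
From mathcomp Require Import all_classical all_reals.
From mathcomp Require Import ereal.

Set Implicit Arguments.
Unset Strict Implicit.
Unset Printing Implicit Defensive.
Import Order.TTheory GRing.Theory Num.Theory.
Local Open Scope ring_scope.
Local Open Scope classical_set_scope.

(* P      : the (finite) set of critical points of f,
   ind p  : the Morse index |p|_f,
   fv p   : the critical value f(p),
   df p q : the integer count <d_f p, q> (signed count of f-flow lines p -> q),
   dmf q p: the integer count <d_{-f} q, p> (signed count of (-f)-flow lines q -> p).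
   Over a ring K the Morse differentials are the images of these counts. *)

Definition morse_data (R : realType) (n : nat) (P : finType)
  (ind : P -> nat) (fv : P -> R) (df dmf : P -> P -> int) : Prop :=
  [/\ (forall p, (ind p <= n)%N),
      (* d_f lowers the index by one and flow lines go down in f (Morse-Smale) *)
      (forall p q, df p q != 0 -> ind p = (ind q).+1 /\ fv q < fv p),
      (forall p r, \sum_(q : P) df p q * df q r = 0)
    & (* coherent orientations: W^u_{-f} = W^s_f, so d_{-f} is, up to a sign
         depending only on the degree, the transpose of d_f *)
      (exists eps : nat -> int, (forall k, eps k = 1 \/ eps k = -1) /\
        (forall p q, dmf q p = eps (ind q) * df p q))].

Section MorseComplex.
Variables (R : realType) (P : finType) (ind : P -> nat) (fv : P -> R).
Variable (K : comNzRingType).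

Definition in_deg (k : nat) (c : {ffun P -> K}) : Prop :=
  forall p, c p != 0 -> ind p = k.

Definition dmap (D : P -> P -> int) (c : {ffun P -> K}) : {ffun P -> K} :=
  [ffun q => \sum_(p : P) c p * (D p q)%:~R].

Definition Pi (x z : {ffun P -> K}) : K := \sum_(p : P) x p * z p.

Definition ell (g : P -> R) (c : {ffun P -> K}) : \bar R :=
  \big[maxe/-oo%E]_(p | c p != 0) (g p)%:E.

Definition ImF (df : P -> P -> int) (k : nat) (y : {ffun P -> K}) : Prop :=
  exists z, in_deg k.+1 z /\ y = dmap df z.

(* x in Im(d_{-f,n-k}); CM_{n-k}(-f) is spanned by points of f-index k *)
Definition ImMF (dmf : P -> P -> int) (k : nat) (x : {ffun P -> K}) : Prop :=
  exists w, in_deg k w /\ x = dmap dmf w.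

(* Lambda(x,y) <> 0, with Lambda(x,y) = Pi(x,z) for z with d_f z = y *)
Definition Lambda_nz (df : P -> P -> int) (k : nat) (x y : {ffun P -> K}) : Prop :=
  exists z, [/\ in_deg k.+1 z, y = dmap df z & Pi x z != 0].

Definition beta_alg (df dmf : P -> P -> int) (k : nat) : \bar R :=
  ereal_sup ([set 0%E] `|`
    [set e | exists x y, [/\ ImMF dmf k x, ImF df k y, Lambda_nz df k x y &
       e = (- ell (fun p => (- fv p)%R) x - ell fv y)%E]]).

Definition dF_zero (df : P -> P -> int) (k : nat) : Prop :=
  forall z, in_deg k.+1 z -> dmap df z = 0.

Definition CM_le (j : nat) (lam : R) (c : {ffun P -> K}) : Prop :=
  in_deg j c /\ (ell fv c <= lam%:E)%E.

Definition beta_inf (df : P -> P -> int) (k : nat) : \bar R :=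
  ereal_inf [set b%:E | b in [set b : R | 0 <= b /\
    forall (lam : R) (y : {ffun P -> K}), ImF df k y -> CM_le k lam y ->
      exists z, CM_le k.+1 (lam + b) z /\ y = dmap df z]].

End MorseComplex.

From HB Require Import structures.
From mathcomp Require Import all_boot all_order all_algebra.
From mathcomp Require Import all_classical all_reals.
From mathcomp Require Import ereal.
From mathcomp Require Import lra.
Set Implicit Arguments.
Unset Strict Implicit.
Unset Printing Implicit Defensive.
Import Order.TTheory GRing.Theory Num.Theory.
Local Open Scope ring_scope.

(* Coherent orientations make d_{-f} the transpose of d_f up to a sign, so
   Pi(d_{-f} w, z) = +-Pi(w, d_f z): Lambda(x, y) != 0 forces x to meet the
   support of every primitive of y, and (-f)-flow lines climb in f. The first
   fact bounds every witness by any admissible shift b. The second makes the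
   witness built from the dual of the highest critical point of a nonzero d_f z
   positive and, over a field, turns a functional separating y from
   d(CM^{ell(y) + beta}) into a witness exceeding beta. *)

Lemma sumr_neq0P (I : finType) (V : nmodType) (F : I -> V) :
  \sum_i F i != 0 -> exists i, F i != 0.
Proof.
apply: contraNP => /forallNP F0.
by rewrite big1 // => i _; apply/eqP/negbNE/negP/F0.
Qed.

Section Pairing.
Variables (P : finType) (K : comNzRingType).
Implicit Types x z : {ffun P -> K}.

Lemma Pi0 x : Pi x 0 = 0.
Proof. by rewrite /Pi big1 // => p _; rewrite ffunE mulr0. Qed.

Lemma Pi_neq0P x z : Pi x z != 0 -> exists p, x p != 0 /\ z p != 0.
Proof.
move=> /sumr_neq0P [p xz_p]; exists p.
by split; apply: contraNneq xz_p => ->; rewrite ?mul0r ?mulr0.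
Qed.

End Pairing.

Section Filtration.
Variables (R : realType) (P : finType) (K : comNzRingType) (g : P -> R).
Implicit Types c x z : {ffun P -> K}.
Local Open Scope ereal_scope.

Lemma le_ell c p : (c p != 0)%R -> (g p)%:E <= ell g c.
Proof. by move=> cp; rewrite /ell; exact: le_bigmax_cond. Qed.

Lemma ell_le c v : (forall p, (c p != 0)%R -> (g p)%:E <= v) -> ell g c <= v.
Proof. by move=> c_le; apply/bigmax_leP; split => //; exact: leNye. Qed.

Lemma ell_attained c p : (c p != 0)%R -> exists2 q, (c q != 0)%R & ell g c = (g q)%:E.
Proof.
move=> cp; rewrite /ell.
by have [q] := @eq_bigmax _ _ _ -oo p (fun p => c p != 0)%R (fun p => (g p)%:E) cp
  (fun q _ => leNye _); exists q.
Qed.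

End Filtration.

Section Separation.
Variable K : fieldType.

Lemma submx_or_separated m n (v : 'rV[K]_n) (M : 'M_(m, n)) :
  (v <= M)%MS \/ exists2 u : 'cV_n, M *m u = 0 & v *m u != 0.
Proof.
case: (boolP (v <= M)%MS); [by left | rewrite submxE => /rV0Pn [j vCj]].
right; exists (cokermx M *m delta_mx j 0); first by rewrite mulmxA mulmx_coker mul0mx.
by apply/matrix0Pn; exists 0, 0; rewrite mulmxA -colE mxE.
Qed.

Variable P : finType.

Lemma sum_enum_rank (V : nmodType) (F : 'I_#|P| -> V) :
  \sum_i F i = \sum_(p : P) F (enum_rank p).
Proof. by rewrite (reindex enum_rank) //; exact: onW_bij (enum_rank_bij P). Qed.

Lemma dmap_range_or_separated (S : pred P) (D : P -> P -> int) (y : {ffun P -> K}) :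
  (exists2 z : {ffun P -> K}, (forall p, z p != 0 -> S p) & y = dmap D z) \/
  (exists2 w : {ffun P -> K},
     (forall p, S p -> \sum_q w q * (D p q)%:~R = 0) & Pi w y != 0).
Proof.
pose M : 'M[K]_#|P| := \matrix_(i, j)
  (if S (enum_val i) then (D (enum_val i) (enum_val j))%:~R else 0).
case: (submx_or_separated (\row_j y (enum_val j)) M) => [/submxP [u yuM] | [u Mu0 yu]].
  left; exists [ffun p => if S p then u 0 (enum_rank p) else 0].
    by move=> p; rewrite ffunE; case: ifP => // _; rewrite eqxx.
  apply/ffunP => q; rewrite !ffunE.
  have /matrixP/(_ 0 (enum_rank q)) := yuM.
  rewrite !mxE enum_rankK => ->; rewrite sum_enum_rank; apply: eq_bigr => p _.
  by rewrite !mxE !enum_rankK !ffunE; case: ifP => _; rewrite ?mulr0 ?mul0r.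
right; exists [ffun q => u (enum_rank q) 0].
  move=> p Sp; have /matrixP/(_ (enum_rank p) 0) := Mu0.
  rewrite !mxE sum_enum_rank => Mu0p; apply: etrans Mu0p; apply: eq_bigr => q _.
  by rewrite !ffunE !mxE !enum_rankK Sp mulrC.
apply: contraNneq yu => yu0; apply/eqP/matrixP => i j; rewrite !ord1 !mxE.
rewrite sum_enum_rank -[RHS]yu0; apply: eq_bigr => q _.
by rewrite !ffunE !mxE enum_rankK mulrC.
Qed.

End Separation.

Section MorseComplex.
Variables (R : realType) (P : finType) (ind : P -> nat) (fv : P -> R).
Variables (df dmf : P -> P -> int) (eps : nat -> int).
Hypothesis df_ind : forall p q, df p q != 0 -> ind p = (ind q).+1.
Hypothesis df_fv : forall p q, df p q != 0 -> fv q < fv p.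
Hypothesis eps_sign : forall k, eps k = 1 \/ eps k = -1.
Hypothesis dmf_eps : forall p q, dmf q p = eps (ind q) * df p q.

Lemma eps_mul_neq0 (K : comNzRingType) k (a : K) : ((eps k)%:~R * a != 0) = (a != 0).
Proof. by case: (eps_sign k) => ->; rewrite ?mul1r // mulrN1z mulN1r oppr_eq0. Qed.

Lemma dmap_df_deg (K : comNzRingType) k (z : {ffun P -> K}) :
  in_deg ind k.+1 z -> in_deg ind k (dmap df z).
Proof.
move=> zk p; rewrite ffunE => /sumr_neq0P [q zdf_q].
have zq : z q != 0 by apply: contraNneq zdf_q => ->; rewrite mul0r.
have dfqp : df q p != 0 by apply: contraNneq zdf_q => ->; rewrite mulr0.
by move: (zk _ zq); rewrite (df_ind dfqp) => -[].
Qed.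

Lemma dmap_dmfE (K : comNzRingType) k (w : {ffun P -> K}) p : in_deg ind k w ->
  dmap dmf w p = (eps k)%:~R * \sum_q w q * (df p q)%:~R.
Proof.
move=> wk; rewrite ffunE mulr_sumr; apply: eq_bigr => q _; rewrite dmf_eps.
by case: (eqVneq (w q) 0) => [->|/wk ->]; rewrite ?mul0r ?mulr0 // intrM mulrCA.
Qed.

Lemma Pi_dmap_dmf (K : comNzRingType) k (w z : {ffun P -> K}) : in_deg ind k w ->
  Pi (dmap dmf w) z = (eps k)%:~R * Pi w (dmap df z).
Proof.
move=> wk; rewrite /Pi; under eq_bigr do rewrite (dmap_dmfE _ wk) -mulrA.
rewrite -mulr_sumr; congr (_ * _); under eq_bigr do rewrite mulr_suml.
rewrite exchange_big; apply: eq_bigr => q _; rewrite ffunE mulr_sumr.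
by apply: eq_bigr => p _; rewrite -mulrA [_ * z p]mulrC.
Qed.

Lemma Pi_dmap_dmf_neq0 (K : comNzRingType) k (w z : {ffun P -> K}) : in_deg ind k w ->
  (Pi (dmap dmf w) z != 0) = (Pi w (dmap df z) != 0).
Proof. by move=> wk; rewrite (Pi_dmap_dmf _ wk) eps_mul_neq0. Qed.

Lemma dmap_dmf_supp (K : comNzRingType) k (w : {ffun P -> K}) p : in_deg ind k w ->
  dmap dmf w p != 0 -> exists2 q, w q != 0 & df p q != 0.
Proof.
move=> wk; rewrite (dmap_dmfE _ wk) eps_mul_neq0 => /sumr_neq0P [q wdf_q].
by exists q; apply: contraNneq wdf_q => ->; rewrite ?mul0r ?mulr0.
Qed.

Definition proj_deg (K : comNzRingType) k (w : {ffun P -> K}) : {ffun P -> K} :=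
  [ffun q => if ind q == k then w q else 0].

Lemma proj_deg_deg (K : comNzRingType) k (w : {ffun P -> K}) :
  in_deg ind k (proj_deg k w).
Proof. by move=> q; rewrite ffunE; case: (ind q =P k) => // _; rewrite eqxx. Qed.

Lemma Pi_proj_deg (K : comNzRingType) k (w y : {ffun P -> K}) :
  in_deg ind k y -> Pi (proj_deg k w) y = Pi w y.
Proof.
move=> yk; apply: eq_bigr => q _; rewrite ffunE; case: (ind q =P k) => // qk.
by case: (eqVneq (y q) 0) => [->|/yk //]; rewrite !mulr0.
Qed.

Lemma dmap_dmf_proj_deg (K : comNzRingType) k (w : {ffun P -> K}) p :
  ind p = k.+1 ->
  dmap dmf (proj_deg k w) p = (eps k)%:~R * \sum_q w q * (df p q)%:~R.
Proof.
move=> pk; rewrite (dmap_dmfE _ (@proj_deg_deg K k w)); congr (_ * _).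
apply: eq_bigr => q _; rewrite ffunE; case: (ind q =P k) => // qk.
case: (eqVneq (df p q) 0) => [->|/df_ind]; first by rewrite !mulr0.
by rewrite pk => -[/esym].
Qed.

Local Open Scope ereal_scope.

Lemma beta_alg_ge0 (K : comNzRingType) k : 0 <= beta_alg ind fv K df dmf k.
Proof. by apply: ereal_sup_ubound; left. Qed.

Lemma le_beta_alg (K : comNzRingType) k (w z : {ffun P -> K}) :
  in_deg ind k w -> in_deg ind k.+1 z -> (Pi (dmap dmf w) z != 0)%R ->
  - ell (fun p => - fv p)%R (dmap dmf w) - ell fv (dmap df z)
    <= beta_alg ind fv K df dmf k.
Proof.
move=> wk zk Pi_wz; apply: ereal_sup_ubound; right.
by exists (dmap dmf w), (dmap df z); split; [exists w | exists z | exists z |].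
Qed.

Lemma beta_alg_le (K : comNzRingType) k (b : \bar R) : 0 <= b ->
  (forall w z : {ffun P -> K}, in_deg ind k w -> in_deg ind k.+1 z ->
     (Pi (dmap dmf w) z != 0)%R ->
     - ell (fun p => - fv p)%R (dmap dmf w) - ell fv (dmap df z) <= b) ->
  beta_alg ind fv K df dmf k <= b.
Proof.
move=> b0 le_b; apply: ge_ereal_sup
  => _ [-> // | [x [y [[w [wk ->]] _ [z [zk -> Pi_wz]] ->]]]].
exact: le_b.
Qed.

Lemma beta_alg_eq0 (K : comNzRingType) k :
  dF_zero ind K df k -> beta_alg ind fv K df dmf k = 0.
Proof.
move=> d0; apply/le_anti; rewrite beta_alg_ge0 andbT.
apply: beta_alg_le => // w z wk zk.
by rewrite (Pi_dmap_dmf_neq0 _ wk) d0 // Pi0 eqxx.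
Qed.

Lemma beta_alg_gt0 (K : comNzRingType) k (z : {ffun P -> K}) p :
  in_deg ind k.+1 z -> (dmap df z p != 0)%R -> 0 < beta_alg ind fv K df dmf k.
Proof.
move=> zk dzp; have [q dzq ell_dz] := ell_attained fv dzp.
pose w : {ffun P -> K} := [ffun r => (r == q)%:R].
have wk : in_deg ind k w.
  move=> r; rewrite ffunE; case: (r =P q) => [-> _|]; last by rewrite eqxx.
  exact: (dmap_df_deg zk dzq).
have Pi_wz : (Pi (dmap dmf w) z != 0)%R.
  rewrite (Pi_dmap_dmf_neq0 _ wk) /Pi (bigD1 q) //= big1 ?addr0 => [|r /negbTE rq].
    by rewrite ffunE eqxx mul1r.
  by rewrite ffunE rq mul0r.
have [r [xr _]] := Pi_neq0P Pi_wz.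
have [p1 xp1 ell_x] := ell_attained (fun p => - fv p)%R xr.
have [q' wq' dfp1q'] := dmap_dmf_supp wk xp1.
have q'q : q' = q by move: wq'; rewrite ffunE; case: (q' =P q) => // _; rewrite eqxx.
apply: lt_le_trans (le_beta_alg wk zk Pi_wz).
by rewrite ell_x ell_dz -EFinN -EFinB lte_fin opprK subr_gt0 -q'q; exact: df_fv.
Qed.

Definition lifts_within (K : comNzRingType) k (b : R) : Prop :=
  forall (lam : R) (y : {ffun P -> K}), ImF ind df k y -> CM_le ind fv k lam y ->
    exists z, CM_le ind fv k.+1 (lam + b) z /\ y = dmap df z.

Lemma beta_alg_le_lifts (K : comNzRingType) k (b : R) :
  (0 <= b)%R -> lifts_within K k b -> beta_alg ind fv K df dmf k <= b%:E.
Proof.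
move=> b0 lift; apply: beta_alg_le => [|w z wk zk Pi_wz]; first by rewrite lee_fin.
rewrite (Pi_dmap_dmf_neq0 _ wk) in Pi_wz.
have [p [_ yp]] := Pi_neq0P Pi_wz.
have [q yq ell_y] := ell_attained fv yp.
have [z' [[_ ell_z'] yz']] :
    exists z', CM_le ind fv k.+1 (fv q + b) z' /\ dmap df z = dmap df z'.
  by apply: lift; [exists z | split; [exact: dmap_df_deg | rewrite ell_y]].
have Pi_wz' : (Pi (dmap dmf w) z' != 0)%R by rewrite (Pi_dmap_dmf_neq0 _ wk) -yz'.
have [p' [xp' z'p']] := Pi_neq0P Pi_wz'.
have [p1 xp1 ell_x] := ell_attained (fun p => - fv p)%R xp'.
have := le_ell (fun p => - fv p)%R xp'; rewrite ell_x lee_fin lerN2 => le_p1.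
have := le_trans (le_ell fv z'p') ell_z'; rewrite lee_fin => le_p'.
by rewrite ell_y -EFinN -EFinB lee_fin opprK; lra.
Qed.

(* The functional separating y from d(CM^{lam + r}_{k+1}) is projected to
   degree k; its image under d_{-f} then lives strictly above lam + r. *)
Lemma lifts_beta_alg (K : fieldType) k (r : R) :
  beta_alg ind fv K df dmf k = r%:E -> lifts_within K k r.
Proof.
move=> beta_r lam y [z [zk yz]] [yk ell_y].
pose S := [pred p | (ind p == k.+1) && (fv p <= lam + r)%R].
case: (dmap_range_or_separated S df y) => [[z' z'S yz'] | [w wS Pi_wy]].
  exists z'; split => //; split => [p /z'S /andP [/eqP] //|].
  by apply: ell_le => p /z'S /andP [_]; rewrite lee_fin.
have Pi_xz : (Pi (dmap dmf (proj_deg k w)) z != 0)%R.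
  by rewrite (Pi_dmap_dmf_neq0 _ (@proj_deg_deg K k w)) -yz (Pi_proj_deg _ yk).
have [q0 [_ yq0]] := Pi_neq0P Pi_wy.
have [q _ ell_yq] := ell_attained fv yq0.
have [p [xp _]] := Pi_neq0P Pi_xz.
have [p1 xp1 ell_x] := ell_attained (fun p => - fv p)%R xp.
have p1k : ind p1 = k.+1.
  have [q1 /(@proj_deg_deg K k w) <-] := dmap_dmf_supp (@proj_deg_deg K k w) xp1.
  exact: df_ind.
have lt_p1 : (lam + r < fv p1)%R.
  rewrite ltNge; apply: contraNN xp1 => le_p1.
  by rewrite dmap_dmf_proj_deg // wS ?mulr0 //= p1k eqxx.
have := le_beta_alg (@proj_deg_deg K k w) zk Pi_xz.
rewrite beta_r -yz ell_x ell_yq -EFinN -EFinB lee_fin opprK.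
by move: ell_y; rewrite ell_yq lee_fin; lra.
Qed.

End MorseComplex.

Theorem proposition5p6 (R : realType) (n : nat) (P : finType)
  (ind : P -> nat) (fv : P -> R) (df dmf : P -> P -> int) :
  morse_data n ind fv df dmf ->
  (forall (K : comNzRingType) (k : nat), (k < n)%N ->
     (beta_alg ind fv K df dmf k = 0%E <-> dF_zero ind K df k)) /\
  (forall (K : fieldType) (k : nat), (k < n)%N ->
     beta_alg ind fv K df dmf k = beta_inf ind fv K df k).
Proof.
case=> _ df_supp _ [eps [eps_sign dmf_eps]].
have df_ind p q (dfpq : df p q != 0) := (df_supp p q dfpq).1.
have df_fv p q (dfpq : df p q != 0) := (df_supp p q dfpq).2.
split=> K k _.
- split=> [beta0 z zk | d0]; last exact: (beta_alg_eq0 fv eps_sign dmf_eps d0).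
  apply/ffunP => p; rewrite [RHS]ffunE; apply/eqP/negP => /negP dzp.
  by have := beta_alg_gt0 df_ind df_fv eps_sign dmf_eps zk dzp; rewrite beta0 ltxx.
- apply/le_anti/andP; split.
    apply: le_ereal_inf_tmp => _ [b [b0 lift] <-].
    by apply: (beta_alg_le_lifts df_ind eps_sign dmf_eps b0).
  have := lifts_beta_alg (fv:=fv) df_ind eps_sign dmf_eps (K:=K) (k:=k).
  have := beta_alg_ge0 ind fv df dmf K k.
  case: (beta_alg ind fv K df dmf k) => [r | | //] r0 lift.
  + by apply: ereal_inf_lbound; exists r => //; split; [rewrite -lee_fin | exact: lift].
  + by rewrite leey.
Qed.
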